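(* Consider $R_0(s)=\int_0^{\bar\theta}J(\theta)s(\theta)\,dF(\theta)$. The following are equivalent: (a) $J$ is nondecreasing on $\Theta$; (b) for all nondecreasing $s,\hat s:\Theta\to[0,1]$ with $\hat s\in\mathrm{MPS}(s)$, $R_0(s)\ge R_0(\hat s)$ (offering more positional-good levels, i.e., a finer allocation, always weakly increases revenue); (c) full separation $s=F$ maximizes $R_0$ over $\mathcal S(0)$.
   Context: Let $0<\bar\theta<\infty$, $\Theta=[0,\bar\theta]$, $F$ a cdf on $\Theta$ with continuous, strictly positive density $f$, $dF=f\,d\theta$, and $J(\theta)=\theta-\frac{1-F(\theta)}{f(\theta)}$. For bounded measurable $a,b$ on $\Theta$, write $b\in\mathrm{MPS}(a)$ if $\int_x^{\bar\theta}b\,dF\le\int_x^{\bar\theta}a\,dF$ for all $x\in\Theta$, with equality at $x=0$. $\mathcal S(0)$ is the set of nondecreasing $s:\Theta\to[0,1]$ with $s\in\mathrm{MPS}(F)$ (feasible interim statuses when exclusion is impossible and the lowest level is free). $R_0(s)$ is the seller's revenue in this setting. *)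

From Stdlib Require Import Reals.
From Coquelicot Require Import Coquelicot.
Open Scope R_scope.

Definition inTheta (tb x : R) : Prop := 0 <= x <= tb.

Definition Jv (F f : R -> R) (t : R) : R := t - (1 - F t) / f t.

(* integral of b against dF = f dtheta over [x, tb] *)
Definition intdF (f b : R -> R) (x tb : R) : R := RInt (fun t => b t * f t) x tb.

Definition MPS (tb : R) (f a b : R -> R) : Prop :=
  (forall x, inTheta tb x -> intdF f b x tb <= intdF f a x tb) /\
  intdF f b 0 tb = intdF f a 0 tb.

Definition nondec01 (tb : R) (s : R -> R) : Prop :=
  (forall x, inTheta tb x -> 0 <= s x <= 1) /\
  (forall x y, 0 <= x -> x <= y -> y <= tb -> s x <= s y).

Definition S0 (tb : R) (F f s : R -> R) : Prop := nondec01 tb s /\ MPS tb f F s.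

Definition Rev0 (tb : R) (F f s : R -> R) : R :=
  RInt (fun t => Jv F f t * s t * f t) 0 tb.

From Stdlib Require Import Reals Lra Lia.
From Coquelicot Require Import Coquelicot.
Open Scope R_scope.

(* Since [R_0(s) = \int J s dF], the revenue lost by spreading [s] into [sh] is
   [\int J (s - sh) dF].  When [J] is nondecreasing it is [J 0] plus a superposition of
   indicators of upper intervals [[x, tb]], and on each of them the spread condition says
   [\int_x (sh - s) dF <= 0]: a second mean value inequality.  Conversely, if [J x > J y]
   with [x < y], pooling [F] on a short interval just above [x] raises the status there and
   pooling it just below [y] lowers it; a mixture of the two that preserves the total mass
   is a spread of [F] and, by continuity of [J], earns more than full separation. *)

(* Coquelicot states these with the generic [plus], [scal] and module carriers; the
   instances below rewrite and apply directly to real integrands. *)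
Lemma ex_RInt_plus_R (f g : R -> R) a b :
  ex_RInt f a b -> ex_RInt g a b -> ex_RInt (fun t => f t + g t) a b.
Proof. exact (ex_RInt_plus f g a b). Qed.

Lemma ex_RInt_minus_R (f g : R -> R) a b :
  ex_RInt f a b -> ex_RInt g a b -> ex_RInt (fun t => f t - g t) a b.
Proof. exact (ex_RInt_minus f g a b). Qed.

Lemma ex_RInt_scal_R (f : R -> R) k a b : ex_RInt f a b -> ex_RInt (fun t => k * f t) a b.
Proof. exact (ex_RInt_scal f a b k). Qed.

Lemma ex_RInt_ext_R (f g : R -> R) a b :
  (forall t, Rmin a b < t < Rmax a b -> f t = g t) -> ex_RInt f a b -> ex_RInt g a b.
Proof. exact (ex_RInt_ext f g a b). Qed.

Lemma RInt_plus_R (f g : R -> R) a b : ex_RInt f a b -> ex_RInt g a b ->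
  RInt (fun t => f t + g t) a b = RInt f a b + RInt g a b.
Proof. exact (RInt_plus f g a b). Qed.

Lemma RInt_minus_R (f g : R -> R) a b : ex_RInt f a b -> ex_RInt g a b ->
  RInt (fun t => f t - g t) a b = RInt f a b - RInt g a b.
Proof. exact (RInt_minus f g a b). Qed.

Lemma RInt_scal_R (f : R -> R) k a b : ex_RInt f a b -> RInt (fun t => k * f t) a b = k * RInt f a b.
Proof. exact (RInt_scal f a b k). Qed.

Lemma RInt_ext_R (f g : R -> R) a b :
  (forall t, Rmin a b < t < Rmax a b -> f t = g t) -> RInt f a b = RInt g a b.
Proof. exact (RInt_ext f g a b). Qed.

Lemma RInt_Chasles_R (f : R -> R) a b c : ex_RInt f a b -> ex_RInt f b c ->
  RInt f a b + RInt f b c = RInt f a c.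
Proof. exact (RInt_Chasles f a b c). Qed.

Lemma is_RInt_ext_R (f g : R -> R) a b l :
  (forall t, Rmin a b < t < Rmax a b -> f t = g t) -> is_RInt f a b l -> is_RInt g a b l.
Proof. exact (is_RInt_ext f g a b l). Qed.

Lemma is_RInt_0_R a b : is_RInt (fun _ : R => 0) a b 0.
Proof.
  pose proof (is_RInt_const (V := R_NormedModule) a b 0) as H.
  change (scal (b - a) 0) with ((b - a) * 0) in H. rewrite Rmult_0_r in H. exact H.
Qed.

Lemma ex_RInt_sub (g : R -> R) a b u v : a <= u -> u <= v -> v <= b ->
  ex_RInt g a b -> ex_RInt g u v.
Proof.
  intros Hau Huv Hvb Hg.
  apply (ex_RInt_Chasles_1 g u v b); [lra|].
  apply (ex_RInt_Chasles_2 g a u b); [lra | exact Hg].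
Qed.

Lemma RInt_eq_0 (g : R -> R) a b : a <= b -> (forall t, a < t < b -> g t = 0) -> RInt g a b = 0.
Proof.
  intros Hab Hg. rewrite (RInt_ext g (fun _ => 0)).
  - rewrite RInt_const. apply Rmult_0_r.
  - intros t Ht. rewrite Rmin_left, Rmax_right in Ht by lra. apply Hg; lra.
Qed.

Lemma continuous_near (g : R -> R) x eps : continuous g x -> 0 < eps ->
  exists r, 0 < r /\ forall t, Rabs (t - x) < r -> Rabs (g t - g x) < eps.
Proof.
  intros Hc Heps.
  destruct (proj1 (filterlim_locally g (g x)) Hc (mkposreal eps Heps)) as [r Hr].
  exists r. split; [apply cond_pos | exact Hr].
Qed.

Definition clamp (a b t : R) : R := Rmax a (Rmin b t).

Lemma clamp_id a b t : a <= t <= b -> clamp a b t = t.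
Proof. unfold clamp, Rmax, Rmin. intros. repeat destruct Rle_dec; lra. Qed.

Lemma clamp_in a b t : a <= b -> a <= clamp a b t <= b.
Proof. unfold clamp, Rmax, Rmin. intros. repeat destruct Rle_dec; lra. Qed.

Lemma clamp_lipschitz a b t u : Rabs (clamp a b t - clamp a b u) <= Rabs (t - u).
Proof.
  unfold clamp, Rmax, Rmin. repeat destruct Rle_dec; unfold Rabs; repeat destruct Rcase_abs; lra.
Qed.

Definition nondecreasing_on (a b : R) (h : R -> R) : Prop :=
  forall x y, a <= x -> x <= y -> y <= b -> h x <= h y.

Definition step (c v : R) : R := if Rle_dec c v then 1 else 0.

(* [L + d * levels_below L d n v] is [v] rounded down to the grid [L + d * k], [k <= n]. *)
Fixpoint levels_below (L d : R) (n : nat) (v : R) : R :=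
  match n with
  | O => 0
  | S k => levels_below L d k v + step (L + INR (S k) * d) v
  end.

Lemma levels_below_top L d n v : 0 < d -> L + INR n * d <= v -> levels_below L d n v = INR n.
Proof.
  intros Hd. induction n as [|n IH]; intros Hv; [reflexivity|].
  cbn [levels_below]. rewrite S_INR in *. rewrite IH by nra.
  unfold step. destruct Rle_dec; lra.
Qed.

Lemma levels_below_approx L d n v : 0 < d -> L <= v < L + (INR n + 1) * d ->
  L + d * levels_below L d n v <= v < L + d * levels_below L d n v + d.
Proof.
  intros Hd. induction n as [|n IH]; intros Hv; [simpl in *; lra|].
  cbn [levels_below]. unfold step. rewrite S_INR in *.
  destruct Rle_dec as [Hle|Hlt].
  - rewrite levels_below_top by nra. lra.
  - specialize (IH ltac:(lra)). lra.
Qed.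

Section NondecreasingWeight.

Variables (a b : R) (h g : R -> R).
Hypothesis Hab : a <= b.
Hypothesis Hh : nondecreasing_on a b h.
Hypothesis Hg : ex_RInt g a b.

(* The upper set [{t | c <= h t}] is an interval with right end [b]. *)
Lemma is_RInt_step_mult c :
  exists x0, a <= x0 <= b /\ is_RInt (fun t => step c (h t) * g t) a b (RInt g x0 b).
Proof.
  set (E := fun t => t = a \/ (a <= t <= b /\ h t < c)).
  assert (HE : bound E) by (exists b; intros t [->|[Ht _]]; lra).
  destruct (completeness E HE (ex_intro _ a (or_introl eq_refl))) as [x0 [Hub Hlub]].
  assert (Hax0 : a <= x0) by (apply Hub; left; reflexivity).
  assert (Hx0b : x0 <= b) by (apply Hlub; intros t [->|[Ht _]]; lra).
  assert (Hlow : forall t, a < t < x0 -> step c (h t) = 0).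
  { intros t Ht. unfold step. destruct Rle_dec as [Hct|]; [exfalso|reflexivity].
    enough (x0 <= t) by lra.
    apply Hlub. intros e [->|[He Hhe]]; [lra|].
    destruct (Rle_dec e t) as [|Hte]; [assumption|].
    enough (h t <= h e) by lra. apply Hh; lra. }
  assert (Hup : forall t, x0 < t <= b -> step c (h t) = 1).
  { intros t Ht. unfold step. destruct Rle_dec; [reflexivity|exfalso].
    enough (t <= x0) by lra. apply Hub. right. split; lra. }
  exists x0. split; [lra|].
  replace (RInt g x0 b) with (plus 0 (RInt g x0 b)) by (apply Rplus_0_l).
  apply (is_RInt_Chasles (V := R_NormedModule) _ a x0 b).
  - apply (is_RInt_ext_R (fun _ => 0)).
    + intros t Ht. rewrite Rmin_left, Rmax_right in Ht by lra.
      rewrite Hlow by lra. ring.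
    + apply is_RInt_0_R.
  - apply (is_RInt_ext_R g).
    + intros t Ht. rewrite Rmin_left, Rmax_right in Ht by lra.
      rewrite Hup by lra. ring.
    + apply (RInt_correct (V := R_CompleteNormedModule)), (ex_RInt_sub g a b); lra || assumption.
Qed.

Lemma is_RInt_levels_below_mult L d n :
  exists I, is_RInt (fun t => levels_below L d n (h t) * g t) a b I /\
    ((forall x, a <= x <= b -> RInt g x b <= 0) -> I <= 0).
Proof.
  induction n as [|n [I [HI HIneg]]].
  - exists 0. split; [|lra].
    apply (is_RInt_ext_R (fun _ => 0)); [intros; simpl; ring|].
    apply is_RInt_0_R.
  - destruct (is_RInt_step_mult (L + INR (S n) * d)) as [x0 [Hx0 Hstep]].
    exists (I + RInt g x0 b). split.
    + apply (is_RInt_ext_R (fun t => levels_below L d n (h t) * g t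
                                   + step (L + INR (S n) * d) (h t) * g t)).
      * intros. cbn [levels_below]. ring.
      * apply (is_RInt_plus (fun t => levels_below L d n (h t) * g t)); assumption.
    + intros Htails. specialize (HIneg Htails). specialize (Htails x0 Hx0). lra.
Qed.

End NondecreasingWeight.

(* [h * g] is the uniform limit of [q_n * g], where [q_n] rounds [h] down to a grid of
   mesh [K / (n + 1)]; uniformity needs [h] and [g] bounded on all of [R]. *)
Lemma ex_RInt_nondecreasing_mult_bounded a b h g lo hi M :
  a <= b -> nondecreasing_on a b h -> ex_RInt g a b ->
  (forall t, lo <= h t <= hi) -> (forall t, Rabs (g t) <= M) ->
  ex_RInt (fun t => h t * g t) a b.
Proof.
  intros Hab Hh Hg Hrange HM.
  set (K := hi - lo + 1).
  assert (HK : 0 < K) by (unfold K; specialize (Hrange a); lra).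
  set (d := fun n : nat => K / INR (S n)).
  assert (Hd : forall n, 0 < d n) by (intros n; apply Rdiv_lt_0_compat; [lra | apply lt_0_INR; lia]).
  assert (HdS : forall n, (INR n + 1) * d n = K).
  { intros n. unfold d. rewrite <- S_INR. field. apply not_0_INR. lia. }
  set (q := fun (n : nat) t => (lo + d n * levels_below lo (d n) n (h t)) * g t).
  assert (Hq : forall n, is_RInt (q n) a b (RInt (q n) a b)).
  { intros n. apply (RInt_correct (V := R_CompleteNormedModule)).
    destruct (is_RInt_levels_below_mult a b h g Hab Hh Hg lo (d n) n) as [I [HI _]].
    apply (ex_RInt_ext_R (fun t => lo * g t + d n * (levels_below lo (d n) n (h t) * g t))).
    - intros. unfold q. ring.
    - apply ex_RInt_plus_R; apply ex_RInt_scal_R; [assumption | exists I; exact HI]. }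
  assert (Hlim : filterlim q eventually (locally (fun t => h t * g t))).
  { apply filterlim_locally. intros eps.
    destruct (INR_archimed eps (K * M) (cond_pos eps)) as [N HN].
    exists N. intros n Hn t. change (Rabs (q n t - h t * g t) < eps).
    assert (Happrox := levels_below_approx lo (d n) n (h t) (Hd n)).
    specialize (Hrange t). rewrite HdS in Happrox. specialize (Happrox ltac:(unfold K; lra)).
    unfold q. set (e := lo + d n * levels_below lo (d n) n (h t) - h t).
    replace (_ - _) with (e * g t) by (unfold e; ring).
    rewrite Rabs_mult.
    assert (He : Rabs e <= d n) by (apply Rabs_le; unfold e; lra).
    assert (HdM : d n * M < eps).
    { apply (le_INR N n) in Hn. assert (0 < INR (S n)) by (apply lt_0_INR; lia).
      unfold d. apply (Rmult_lt_reg_l (INR (S n))); [assumption|].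
      replace (INR (S n) * (K / INR (S n) * M)) with (K * M) by (field; lra).
      rewrite S_INR. pose proof (cond_pos eps). nra. }
    pose proof (Rabs_pos e). pose proof (Rabs_pos (g t)). specialize (HM t). nra. }
  destruct (filterlim_RInt q a b eventually eventually_filter _ _ Hq Hlim) as [I [_ HI]].
  exists I. exact HI.
Qed.

Lemma ex_RInt_nondecreasing_mult a b h g :
  a <= b -> nondecreasing_on a b h -> ex_RInt g a b -> ex_RInt (fun t => h t * g t) a b.
Proof.
  intros Hab Hh Hg.
  assert (Hopen : forall (u : R -> R) t, Rmin a b < t < Rmax a b -> u (clamp a b t) = u t).
  { intros u t Ht. rewrite Rmin_left, Rmax_right in Ht by lra. rewrite clamp_id by lra. reflexivity. }
  apply (ex_RInt_ext_R (fun t => h (clamp a b t) * g (clamp a b t)));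
    [intros; rewrite !Hopen by assumption; reflexivity|].
  destruct (ex_RInt_ub g a b Hg) as [M HM].
  apply (ex_RInt_nondecreasing_mult_bounded _ _ _ _ (h a) (h b) M Hab).
  - intros x y Hx Hxy Hy. rewrite !clamp_id by lra. apply Hh; lra.
  - apply (ex_RInt_ext_R g); [intros; symmetry; apply Hopen|]; assumption.
  - intros t. destruct (clamp_in a b t Hab). split; apply Hh; lra.
  - intros t. apply (HM (clamp a b t)). rewrite Rmin_left, Rmax_right by lra. apply clamp_in; lra.
Qed.

Lemma Rle_0_of_forall_le_mult X K : 0 <= K -> (forall d, 0 < d -> X <= d * K) -> X <= 0.
Proof.
  intros HK HX. apply Rnot_lt_le. intros Hpos.
  specialize (HX (X / (K + 1)) ltac:(apply Rdiv_lt_0_compat; lra)).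
  apply (Rmult_le_compat_r (K + 1)) in HX; [|lra].
  replace (X / (K + 1) * K * (K + 1)) with (X * K) in HX by (field; lra). nra.
Qed.

(* The second mean value inequality: [h - h a >= 0] is, up to [d], a superposition of
   indicators of upper intervals, on each of which [g] has nonpositive integral. *)
Lemma RInt_nondecreasing_mult_le a b h g :
  a <= b -> nondecreasing_on a b h -> ex_RInt g a b ->
  (forall x, a <= x <= b -> RInt g x b <= 0) ->
  RInt (fun t => h t * g t) a b <= h a * RInt g a b.
Proof.
  intros Hab Hh Hg Htails.
  destruct (ex_RInt_ub g a b Hg) as [M HM].
  rewrite Rmin_left, Rmax_right in HM by lra.
  assert (HM0 : 0 <= M) by (apply (Rle_trans _ (Rabs (g a))); [apply Rabs_pos | apply HM; lra]).
  assert (Hhg := ex_RInt_nondecreasing_mult a b h g Hab Hh Hg).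
  apply Rminus_le, (Rle_0_of_forall_le_mult _ ((b - a) * M)); [nra|].
  intros d Hd.
  destruct (INR_archimed d (h b - h a) Hd) as [n Hn].
  set (lev := fun t => levels_below (h a) d n (h t)).
  destruct (is_RInt_levels_below_mult a b h g Hab Hh Hg (h a) d n) as [I [HI HIneg]].
  specialize (HIneg Htails).
  set (err := fun t => (h t - h a - d * lev t) * g t).
  assert (Hsplit : forall t, h t * g t - h a * g t = d * (lev t * g t) + err t)
    by (intros; unfold err; ring).
  assert (Herr_int : ex_RInt err a b).
  { apply (ex_RInt_ext_R (fun t => (h t * g t - h a * g t) - d * (lev t * g t)));
      [intros; rewrite Hsplit; ring|].
    apply ex_RInt_minus_R; [apply ex_RInt_minus_R | apply ex_RInt_scal_R];
      [assumption | apply ex_RInt_scal_R; assumption | exists I; exact HI]. }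
  assert (Herr_le : RInt err a b <= (b - a) * (d * M)).
  { eapply Rle_trans; [apply Rle_abs|]. apply abs_RInt_le_const; [assumption|assumption|].
    intros t Ht. unfold err. rewrite Rabs_mult.
    assert (h a <= h t <= h b) by (split; apply Hh; lra).
    destruct (levels_below_approx (h a) d n (h t) Hd) as [H1 H2]; [nra|].
    apply Rmult_le_compat; [apply Rabs_pos | apply Rabs_pos | | apply HM; lra].
    apply Rabs_le. unfold lev. lra. }
  rewrite <- RInt_scal_R by assumption.
  rewrite <- RInt_minus_R by (assumption || (apply ex_RInt_scal_R; assumption)).
  rewrite (RInt_ext_R _ (fun t => d * (lev t * g t) + err t)) by (intros; apply Hsplit).
  rewrite RInt_plus_R by (assumption || (apply ex_RInt_scal_R; exists I; exact HI)).
  rewrite RInt_scal_R by (exists I; exact HI).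
  unfold lev. rewrite (is_RInt_unique _ a b I HI). nra.
Qed.

Definition pool (F : R -> R) (a m c t : R) : R :=
  if Rle_dec a t then if Rle_dec t m then c else F t else F t.

Lemma nondec01_pool tb F a m c : nondec01 tb F -> 0 <= a -> a <= m -> m <= tb ->
  F a <= c <= F m -> nondec01 tb (pool F a m c).
Proof.
  intros [HF01 HFmono] Ha Ham Hm Hc.
  assert (HFa := HF01 a ltac:(unfold inTheta; lra)). assert (HFm := HF01 m ltac:(unfold inTheta; lra)).
  split.
  - intros t Ht. unfold pool. repeat destruct Rle_dec; (lra || apply HF01; assumption).
  - assert (Hbelow : forall t, 0 <= t -> t <= a -> F t <= c).
    { intros t Ht Hta. apply Rle_trans with (F a); [apply HFmono|]; lra. }
    assert (Habove : forall t, m <= t -> t <= tb -> c <= F t).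
    { intros t Hmt Ht. apply Rle_trans with (F m); [|apply HFmono]; lra. }
    intros x y Hx Hxy Hy. unfold pool.
    repeat destruct Rle_dec; try lra;
      first [apply HFmono; lra | apply Hbelow; lra | apply Habove; lra].
Qed.

Lemma nondec01_convex tb s1 s2 al : 0 <= al <= 1 -> nondec01 tb s1 -> nondec01 tb s2 ->
  nondec01 tb (fun t => al * s1 t + (1 - al) * s2 t).
Proof.
  intros Hal [H01 Hmono] [H01' Hmono']. split.
  - intros t Ht. specialize (H01 t Ht). specialize (H01' t Ht). nra.
  - intros x y Hx Hxy Hy. specialize (Hmono x y Hx Hxy Hy). specialize (Hmono' x y Hx Hxy Hy). nra.
Qed.

Lemma mixture_tails_nonpos (u1 u2 : R -> R) b c al be :
  0 <= c <= b -> ex_RInt u1 0 b -> ex_RInt u2 0 b ->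
  (forall t, 0 < t < b -> 0 <= u1 t) -> (forall t, c < t < b -> u1 t = 0) ->
  (forall t, 0 < t < b -> u2 t <= 0) -> (forall t, 0 < t < c -> u2 t = 0) ->
  0 <= al -> 0 <= be -> al * RInt u1 0 b + be * RInt u2 0 b = 0 ->
  forall z, 0 <= z <= b -> al * RInt u1 z b + be * RInt u2 z b <= 0.
Proof.
  intros Hc Hu1 Hu2 Hpos1 Hzero1 Hneg2 Hzero2 Hal Hbe Hbal z Hz.
  rewrite <- (RInt_Chasles_R u1 0 z b), <- (RInt_Chasles_R u2 0 z b) in Hbal
    by (apply (ex_RInt_sub _ 0 b); lra || assumption).
  destruct (Rle_dec z c) as [Hzc|Hzc].
  - rewrite (RInt_eq_0 u2 0 z) in Hbal by (lra || (intros; apply Hzero2; lra)).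
    assert (0 <= RInt u1 0 z).
    { apply RInt_ge_0; [lra| apply (ex_RInt_sub _ 0 b); lra || assumption|].
      intros; apply Hpos1; lra. }
    nra.
  - rewrite (RInt_eq_0 u1 z b) by (lra || (intros; apply Hzero1; lra)).
    assert (RInt u2 z b <= 0).
    { rewrite <- (RInt_eq_0 (fun _ => 0) z b) by (lra || reflexivity).
      apply RInt_le; [lra | apply (ex_RInt_sub _ 0 b); lra || assumption | apply ex_RInt_const |].
      intros; apply Hneg2; lra. }
    nra.
Qed.

Section Revenue.

Variables (tb : R) (F f : R -> R).
Hypothesis Htb : 0 < tb.
Hypothesis Hfcont : forall x, inTheta tb x ->
  filterlim f (within (inTheta tb) (locally x)) (locally (f x)).
Hypothesis Hfpos : forall x, inTheta tb x -> 0 < f x.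
Hypothesis HF : forall x, inTheta tb x -> F x = RInt f 0 x.
Hypothesis HF1 : F tb = 1.

(* [f] is continuous only within [Theta]; extended by constants it is continuous on [R]. *)
Let fe (t : R) : R := f (clamp 0 tb t).
Let Fe (t : R) : R := RInt fe 0 t.
Let Ge (t : R) : R := t * fe t - (1 - Fe t).
Let Je (t : R) : R := t - (1 - Fe t) / fe t.

Lemma fe_eq t : inTheta tb t -> fe t = f t.
Proof. intros Ht. unfold fe. rewrite clamp_id by exact Ht. reflexivity. Qed.

Lemma fe_pos t : 0 < fe t.
Proof. apply Hfpos, clamp_in. lra. Qed.

Lemma fe_continuous x : continuous fe x.
Proof.
  apply (filterlim_comp _ _ _ _ f _ (within (inTheta tb) (locally (clamp 0 tb x)))).
  - intros P [eps HP]. exists eps. intros t Ht. apply HP; [|apply clamp_in; lra].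
    apply (Rle_lt_trans _ (Rabs (t - x))); [apply clamp_lipschitz | exact Ht].
  - apply Hfcont, clamp_in. lra.
Qed.

Lemma ex_RInt_fe u v : ex_RInt fe u v.
Proof. apply (ex_RInt_continuous (V := R_CompleteNormedModule)). intros; apply fe_continuous. Qed.

Lemma Fe_continuous x : continuous Fe x.
Proof.
  apply (ex_derive_continuous (V := R_NormedModule)). exists (fe x).
  apply (is_derive_RInt (V := R_NormedModule) fe Fe 0 x); [|apply fe_continuous].
  apply filter_forall. intros y. apply (RInt_correct (V := R_CompleteNormedModule)), ex_RInt_fe.
Qed.

Lemma Fe_increasing u v : u < v -> Fe u < Fe v.
Proof.
  intros Huv. unfold Fe. rewrite <- (RInt_Chasles_R fe 0 u v) by apply ex_RInt_fe.
  enough (0 < RInt fe u v) by lra.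
  apply RInt_gt_0; [exact Huv | intros; apply fe_pos | intros; apply fe_continuous].
Qed.

Lemma F_eq_Fe t : inTheta tb t -> F t = Fe t.
Proof.
  intros Ht. rewrite HF by exact Ht. apply RInt_ext_R. intros u Hu.
  rewrite Rmin_left, Rmax_right in Hu by (unfold inTheta in Ht; lra).
  symmetry. apply fe_eq. unfold inTheta in *. lra.
Qed.

Lemma F_nondec01 : nondec01 tb F.
Proof.
  assert (Hmono : forall x y, 0 <= x -> x <= y -> y <= tb -> F x <= F y).
  { intros x y Hx Hxy Hy. rewrite !F_eq_Fe by (unfold inTheta; lra).
    destruct (Rle_lt_or_eq_dec x y Hxy) as [Hlt| ->]; [left; apply Fe_increasing|]; lra. }
  split; [|exact Hmono].
  intros t Ht. unfold inTheta in Ht. split.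
  - replace 0 with (F 0) by (rewrite F_eq_Fe by (unfold inTheta; lra); exact (RInt_point 0 fe)).
    apply Hmono; lra.
  - rewrite <- HF1. apply Hmono; lra.
Qed.

Lemma Jv_eq_Je t : inTheta tb t -> Jv F f t = Je t.
Proof. intros Ht. unfold Jv, Je. rewrite F_eq_Fe, fe_eq by exact Ht. reflexivity. Qed.

Lemma Jv_mult_f t : inTheta tb t -> Jv F f t * f t = Ge t.
Proof.
  intros Ht. unfold Jv, Ge. rewrite F_eq_Fe, <- fe_eq by exact Ht.
  field. apply Rgt_not_eq, fe_pos.
Qed.

Lemma Je_continuous x : continuous Je x.
Proof.
  apply continuity_pt_filterlim. unfold Je.
  apply continuity_pt_minus; [apply continuity_pt_id|].
  apply continuity_pt_div; [| |apply Rgt_not_eq, fe_pos].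
  - apply continuity_pt_minus; [apply continuity_pt_const; intros ? ?; reflexivity|].
    apply continuity_pt_filterlim, Fe_continuous.
  - apply continuity_pt_filterlim, fe_continuous.
Qed.

Lemma ex_RInt_Ge : ex_RInt Ge 0 tb.
Proof.
  apply (ex_RInt_continuous (V := R_CompleteNormedModule)). intros x _.
  apply continuity_pt_filterlim. unfold Ge.
  apply continuity_pt_minus.
  - apply continuity_pt_mult; [apply continuity_pt_id | apply continuity_pt_filterlim, fe_continuous].
  - apply continuity_pt_minus; [apply continuity_pt_const; intros ? ?; reflexivity|].
    apply continuity_pt_filterlim, Fe_continuous.
Qed.

Lemma ex_RInt_mult_f s : nondec01 tb s -> ex_RInt (fun t => s t * f t) 0 tb.
Proof.
  intros [_ Hs]. apply ex_RInt_nondecreasing_mult; [lra | exact Hs|].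
  apply (ex_RInt_ext_R fe); [|apply ex_RInt_fe].
  intros t Ht. rewrite Rmin_left, Rmax_right in Ht by lra. apply fe_eq. unfold inTheta. lra.
Qed.

Lemma ex_RInt_Jv_mult s : nondec01 tb s -> ex_RInt (fun t => Jv F f t * s t * f t) 0 tb.
Proof.
  intros [_ Hs]. apply (ex_RInt_ext_R (fun t => s t * Ge t)).
  - intros t Ht. rewrite Rmin_left, Rmax_right in Ht by lra.
    rewrite <- Jv_mult_f by (unfold inTheta; lra). ring.
  - apply ex_RInt_nondecreasing_mult; [lra | exact Hs | exact ex_RInt_Ge].
Qed.

Lemma ex_RInt_dev s s' : nondec01 tb s -> nondec01 tb s' ->
  ex_RInt (fun t => (s t - s' t) * f t) 0 tb.
Proof.
  intros Hs Hs'. apply (ex_RInt_ext_R (fun t => s t * f t - s' t * f t)); [intros; ring|].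
  apply ex_RInt_minus_R; apply ex_RInt_mult_f; assumption.
Qed.

Lemma ex_RInt_Jv_dev s s' : nondec01 tb s -> nondec01 tb s' ->
  ex_RInt (fun t => Jv F f t * ((s t - s' t) * f t)) 0 tb.
Proof.
  intros Hs Hs'. apply (ex_RInt_ext_R (fun t => Jv F f t * s t * f t - Jv F f t * s' t * f t));
    [intros; ring|].
  apply ex_RInt_minus_R; apply ex_RInt_Jv_mult; assumption.
Qed.

Lemma intdF_sub s s' z : nondec01 tb s -> nondec01 tb s' -> 0 <= z <= tb ->
  intdF f s z tb - intdF f s' z tb = RInt (fun t => (s t - s' t) * f t) z tb.
Proof.
  intros Hs Hs' Hz. unfold intdF.
  rewrite <- RInt_minus_R by (apply (ex_RInt_sub _ 0 tb); lra || apply ex_RInt_mult_f; assumption).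
  apply RInt_ext_R. intros; ring.
Qed.

Lemma Rev0_sub s s' : nondec01 tb s -> nondec01 tb s' ->
  Rev0 tb F f s - Rev0 tb F f s' = RInt (fun t => Jv F f t * ((s t - s' t) * f t)) 0 tb.
Proof.
  intros Hs Hs'. unfold Rev0.
  rewrite <- RInt_minus_R by (apply ex_RInt_Jv_mult; assumption).
  apply RInt_ext_R. intros; ring.
Qed.

Lemma Rev0_le_of_MPS : nondecreasing_on 0 tb (Jv F f) ->
  forall s sh, nondec01 tb s -> nondec01 tb sh -> MPS tb f s sh -> Rev0 tb F f sh <= Rev0 tb F f s.
Proof.
  intros HJ s sh Hs Hsh [Htails Hmass].
  set (D := fun t => (sh t - s t) * f t).
  assert (HD0 : RInt D 0 tb = 0) by (unfold D; rewrite <- intdF_sub by (assumption || lra); lra).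
  enough (Hle : RInt (fun t => Jv F f t * D t) 0 tb <= Jv F f 0 * RInt D 0 tb).
  { rewrite HD0, Rmult_0_r in Hle. unfold D in Hle. rewrite <- Rev0_sub in Hle by assumption. lra. }
  apply RInt_nondecreasing_mult_le; [lra | exact HJ | apply ex_RInt_dev; assumption |].
  intros x Hx. unfold D. rewrite <- intdF_sub by assumption.
  specialize (Htails x Hx). lra.
Qed.

Let pool_dev (a m c t : R) : R := (pool F a m c t - F t) * f t.

Lemma pool_dev_cases a m c t :
  (a <= t <= m /\ pool_dev a m c t = (c - F t) * f t) \/
  (~ (a <= t <= m) /\ pool_dev a m c t = 0).
Proof.
  unfold pool_dev, pool. destruct (Rle_dec a t); [destruct (Rle_dec t m)|].
  - left. split; [lra | reflexivity].
  - right. split; [lra | ring].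
  - right. split; [lra | ring].
Qed.

Lemma nondec01_pool_F a m c : 0 <= a -> a <= m -> m <= tb -> c = F a \/ c = F m ->
  nondec01 tb (pool F a m c).
Proof.
  intros Ha Ham Hm Hc. pose proof F_nondec01 as [HF01 HFmono].
  apply nondec01_pool; [split | | | |]; try assumption.
  assert (F a <= F m) by (apply HFmono; lra). destruct Hc as [-> | ->]; lra.
Qed.

Lemma pool_gap_continuous c x : continuous (fun t => (c - Fe t) * fe t) x.
Proof.
  apply continuity_pt_filterlim, continuity_pt_mult.
  - apply continuity_pt_minus; [apply continuity_pt_const; intros ? ?; reflexivity|].
    apply continuity_pt_filterlim, Fe_continuous.
  - apply continuity_pt_filterlim, fe_continuous.
Qed.

Lemma RInt_pool_dev a m c : 0 <= a -> a <= m -> m <= tb ->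
  RInt (pool_dev a m c) 0 tb = RInt (fun t => (c - Fe t) * fe t) a m.
Proof.
  intros Ha Ham Hm. set (g := pool_dev a m c).
  assert (Hout : forall u v, u <= v -> (forall t, u < t < v -> ~ (a <= t <= m)) ->
    RInt g u v = 0 /\ ex_RInt g u v).
  { intros u v Huv Hnot.
    assert (Hz : forall t, u < t < v -> g t = 0).
    { intros t Ht. destruct (pool_dev_cases a m c t) as [[Hin _]|[_ Hg]]; [|exact Hg].
      exfalso. exact (Hnot t Ht Hin). }
    split; [apply RInt_eq_0; assumption|].
    apply (ex_RInt_ext_R (fun _ => 0)); [|apply ex_RInt_const].
    intros t Ht. rewrite Rmin_left, Rmax_right in Ht by lra. symmetry. apply Hz, Ht. }
  assert (Hin : forall t, Rmin a m < t < Rmax a m -> (c - Fe t) * fe t = g t).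
  { intros t Ht. rewrite Rmin_left, Rmax_right in Ht by lra.
    destruct (pool_dev_cases a m c t) as [[_ Hg]|[Hnot _]]; [|exfalso; apply Hnot; lra].
    unfold g. rewrite Hg, F_eq_Fe, fe_eq by (unfold inTheta; lra). reflexivity. }
  assert (Hmid : ex_RInt g a m).
  { apply (ex_RInt_ext_R _ _ a m Hin), (ex_RInt_continuous (V := R_CompleteNormedModule)).
    intros; apply pool_gap_continuous. }
  destruct (Hout 0 a Ha) as [Hleft Hleft_ex]; [intros; lra|].
  destruct (Hout m tb Hm) as [Hright Hright_ex]; [intros; lra|].
  assert (Hex : ex_RInt g a tb) by (apply (ex_RInt_Chasles g a m tb); assumption).
  rewrite <- (RInt_Chasles_R g 0 a tb) by assumption.
  rewrite <- (RInt_Chasles_R g a m tb) by assumption.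
  rewrite Hleft, Hright, (RInt_ext_R _ _ a m Hin). rewrite Rplus_0_r, Rplus_0_l. reflexivity.
Qed.

Lemma RInt_pool_up_dev_pos a m : 0 <= a -> a < m -> m <= tb -> 0 < RInt (pool_dev a m (F m)) 0 tb.
Proof.
  intros Ha Ham Hm. rewrite RInt_pool_dev, F_eq_Fe by (unfold inTheta; lra).
  apply RInt_gt_0; [exact Ham | | intros; apply pool_gap_continuous].
  intros t Ht. pose proof (Fe_increasing t m ltac:(lra)). pose proof (fe_pos t). nra.
Qed.

Lemma RInt_pool_down_dev_neg a m : 0 <= a -> a < m -> m <= tb -> RInt (pool_dev a m (F a)) 0 tb < 0.
Proof.
  intros Ha Ham Hm. rewrite RInt_pool_dev, F_eq_Fe by (unfold inTheta; lra).
  assert (Hpos : 0 < RInt (fun t => -1 * ((Fe a - Fe t) * fe t)) a m).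
  { apply RInt_gt_0; [exact Ham | |].
    - intros t Ht. pose proof (Fe_increasing a t ltac:(lra)). pose proof (fe_pos t). nra.
    - intros x _. apply continuity_pt_filterlim, continuity_pt_scal, continuity_pt_filterlim,
        pool_gap_continuous. }
  rewrite RInt_scal_R in Hpos by (apply (ex_RInt_continuous (V := R_CompleteNormedModule));
                                   intros; apply pool_gap_continuous).
  lra.
Qed.

Lemma RInt_Jv_pool_dev_ge a m c j : 0 <= a -> a <= m -> m <= tb -> c = F a \/ c = F m ->
  (forall t, a <= t <= m -> j * (c - F t) <= Jv F f t * (c - F t)) ->
  j * RInt (pool_dev a m c) 0 tb <= RInt (fun t => Jv F f t * pool_dev a m c t) 0 tb.
Proof.
  intros Ha Ham Hm Hc Hj.
  assert (Hs : nondec01 tb (pool F a m c)) by (apply nondec01_pool_F; assumption).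
  rewrite <- RInt_scal_R by (apply ex_RInt_dev; [exact Hs | apply F_nondec01]).
  apply RInt_le; [lra | apply ex_RInt_scal_R, ex_RInt_dev | apply ex_RInt_Jv_dev |];
    try (exact Hs || apply F_nondec01).
  intros t Ht. destruct (pool_dev_cases a m c t) as [[Hin ->]|[_ ->]]; [|lra].
  specialize (Hj t Hin). pose proof (Hfpos t ltac:(unfold inTheta; lra)). nra.
Qed.

Lemma ex_RInt_pool_dev a m c : 0 <= a -> a <= m -> m <= tb -> c = F a \/ c = F m ->
  ex_RInt (pool_dev a m c) 0 tb.
Proof. intros. apply ex_RInt_dev; [apply nondec01_pool_F; assumption | apply F_nondec01]. Qed.

Section PoolMixture.

Variables (a m m' d al : R).
Hypothesis Hpools : 0 <= a <= m /\ m <= m' /\ m' <= d <= tb.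
Hypothesis Hal : 0 <= al <= 1.

Let s (t : R) : R := al * pool F a m (F m) t + (1 - al) * pool F m' d (F m') t.

Lemma nondec01_pool_mixture : nondec01 tb s.
Proof. apply nondec01_convex; [exact Hal | |]; apply nondec01_pool_F; tauto || lra. Qed.

Lemma pool_mixture_dev t : (s t - F t) * f t = al * pool_dev a m (F m) t + (1 - al) * pool_dev m' d (F m') t.
Proof. unfold s, pool_dev. ring. Qed.

(* Raising status on [[a, m]] and lowering it on [[m', d]] to the right: once the two masses
   balance, every upper tail loses mass. *)
Lemma pool_mixture_S0 :
  al * RInt (pool_dev a m (F m)) 0 tb + (1 - al) * RInt (pool_dev m' d (F m')) 0 tb = 0 ->
  S0 tb F f s.
Proof.
  intros Hbal. pose proof F_nondec01 as NF.
  assert (Hg1 := ex_RInt_pool_dev a m (F m)). assert (Hg2 := ex_RInt_pool_dev m' d (F m')).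
  assert (Htail : forall z, 0 <= z <= tb -> intdF f s z tb - intdF f F z tb =
    al * RInt (pool_dev a m (F m)) z tb + (1 - al) * RInt (pool_dev m' d (F m')) z tb).
  { intros z Hz. rewrite intdF_sub by (exact nondec01_pool_mixture || exact NF || exact Hz).
    assert (Hsub : forall g, ex_RInt g 0 tb -> ex_RInt g z tb)
      by (intros g Hg; apply (ex_RInt_sub _ 0 tb); lra || assumption).
    rewrite (RInt_ext_R _ _ z tb (fun t _ => pool_mixture_dev t)).
    rewrite RInt_plus_R by (apply ex_RInt_scal_R, Hsub; (apply Hg1 || apply Hg2); tauto || lra).
    rewrite !RInt_scal_R by (apply Hsub; (apply Hg1 || apply Hg2); tauto || lra).
    reflexivity. }
  split; [exact nondec01_pool_mixture | split].
  - intros z Hz. unfold inTheta in Hz. apply Rminus_le. rewrite Htail by exact Hz.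
    apply (mixture_tails_nonpos _ _ tb m); try lra; try ((apply Hg1 || apply Hg2); tauto || lra).
    + intros t Ht. destruct (pool_dev_cases a m (F m) t) as [[Hin ->]|[_ ->]]; [|lra].
      pose proof (proj2 NF t m ltac:(lra) ltac:(lra) ltac:(lra)).
      pose proof (Hfpos t ltac:(unfold inTheta; lra)). nra.
    + intros t Ht. destruct (pool_dev_cases a m (F m) t) as [[Hin _]|[_ Hg]]; [lra|exact Hg].
    + intros t Ht. destruct (pool_dev_cases m' d (F m') t) as [[Hin ->]|[_ ->]]; [|lra].
      pose proof (proj2 NF m' t ltac:(lra) ltac:(lra) ltac:(lra)).
      pose proof (Hfpos t ltac:(unfold inTheta; lra)). nra.
    + intros t Ht. destruct (pool_dev_cases m' d (F m') t) as [[Hin _]|[_ Hg]]; [lra|exact Hg].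
  - apply Rminus_diag_uniq. rewrite Htail by lra. exact Hbal.
Qed.

Lemma Rev0_pool_mixture_ge jx jy :
  (forall t, a <= t <= m -> jx <= Jv F f t) -> (forall t, m' <= t <= d -> Jv F f t <= jy) ->
  al * (jx * RInt (pool_dev a m (F m)) 0 tb) + (1 - al) * (jy * RInt (pool_dev m' d (F m')) 0 tb)
  <= Rev0 tb F f s - Rev0 tb F f F.
Proof.
  intros HJlow HJhigh. pose proof F_nondec01 as NF.
  rewrite Rev0_sub by (exact nondec01_pool_mixture || exact NF).
  rewrite (RInt_ext_R (fun t => Jv F f t * ((s t - F t) * f t))
                      (fun t => al * (Jv F f t * pool_dev a m (F m) t)
                                  + (1 - al) * (Jv F f t * pool_dev m' d (F m') t)))
    by (intros; unfold s, pool_dev; ring).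
  assert (HJ1 : ex_RInt (fun t => Jv F f t * pool_dev a m (F m) t) 0 tb)
    by (apply ex_RInt_Jv_dev; [apply nondec01_pool_F; tauto || lra | exact NF]).
  assert (HJ2 : ex_RInt (fun t => Jv F f t * pool_dev m' d (F m') t) 0 tb)
    by (apply ex_RInt_Jv_dev; [apply nondec01_pool_F; tauto || lra | exact NF]).
  rewrite RInt_plus_R by (apply ex_RInt_scal_R; assumption).
  rewrite (RInt_scal_R (fun t => Jv F f t * pool_dev a m (F m) t)),
    (RInt_scal_R (fun t => Jv F f t * pool_dev m' d (F m') t)) by assumption.
  apply Rplus_le_compat; apply Rmult_le_compat_l; try lra; apply RInt_Jv_pool_dev_ge; try tauto; try lra.
  - intros t Ht. specialize (HJlow t Ht).
    pose proof (proj2 NF t m ltac:(lra) ltac:(lra) ltac:(lra)). nra.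
  - intros t Ht. specialize (HJhigh t Ht).
    pose proof (proj2 NF m' t ltac:(lra) ltac:(lra) ltac:(lra)). nra.
Qed.

End PoolMixture.

Lemma pooling_improves a m m' d jx jy :
  0 <= a -> a < m -> m < m' -> m' < d -> d <= tb -> jy < jx ->
  (forall t, a <= t <= m -> jx <= Jv F f t) -> (forall t, m' <= t <= d -> Jv F f t <= jy) ->
  exists s, S0 tb F f s /\ Rev0 tb F f F < Rev0 tb F f s.
Proof.
  intros Ha Ham Hmm' Hm'd Hd Hj HJlow HJhigh.
  set (A := RInt (pool_dev a m (F m)) 0 tb). set (B := - RInt (pool_dev m' d (F m')) 0 tb).
  assert (HA : 0 < A) by (apply RInt_pool_up_dev_pos; lra).
  assert (HB : 0 < B) by (unfold B; pose proof (RInt_pool_down_dev_neg m' d); lra).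
  set (al := B / (A + B)).
  assert (Hal : 0 <= al <= 1).
  { unfold al. split; [apply Rdiv_le_0_compat; lra|].
    replace 1 with ((A + B) / (A + B)) by (field; lra).
    apply Rmult_le_compat_r; [left; apply Rinv_0_lt_compat|]; lra. }
  assert (Hpools : 0 <= a <= m /\ m <= m' /\ m' <= d <= tb) by lra.
  assert (Hbal : al * A = (1 - al) * B) by (unfold al; field; lra).
  eexists. split.
  - apply (pool_mixture_S0 a m m' d al Hpools Hal). fold A. replace (RInt _ 0 tb) with (- B) by (unfold B; ring). lra.
  - apply Rlt_0_minus. eapply Rlt_le_trans; [|apply (Rev0_pool_mixture_ge a m m' d al Hpools Hal jx jy HJlow HJhigh)].
    fold A. replace (RInt (pool_dev m' d (F m')) 0 tb) with (- B) by (unfold B; ring).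
    replace ((1 - al) * (jy * - B)) with (- jy * ((1 - al) * B)) by ring. rewrite <- Hbal.
    assert (0 < al * A) by (unfold al; apply Rmult_lt_0_compat; [apply Rdiv_lt_0_compat|]; lra).
    nra.
Qed.

Lemma Jv_nondecreasing_of_optimal :
  (forall s, S0 tb F f s -> Rev0 tb F f s <= Rev0 tb F f F) -> nondecreasing_on 0 tb (Jv F f).
Proof.
  intros HC x y Hx Hxy Hy. apply Rnot_lt_le. intros HJ.
  assert (Hlt : x < y) by (destruct (Rle_lt_or_eq_dec x y Hxy) as [|<-]; lra).
  set (eta := (Jv F f x - Jv F f y) / 3).
  assert (Heta : 0 < eta) by (unfold eta; lra).
  assert (Heta3 : 3 * eta = Jv F f x - Jv F f y) by (unfold eta; field).
  destruct (continuous_near Je x eta (Je_continuous x) Heta) as [rx [Hrx Hnearx]].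
  destruct (continuous_near Je y eta (Je_continuous y) Heta) as [ry [Hry Hneary]].
  set (r := Rmin (Rmin rx ry) ((y - x) / 2) / 2).
  assert (Hr : 0 < r /\ r < rx /\ r < ry /\ 2 * r < y - x)
    by (unfold r, Rmin; repeat destruct Rle_dec; lra).
  destruct Hr as (Hr0 & Hrx' & Hry' & Hr2).
  assert (Hlow : forall t, x <= t <= x + r -> Jv F f x - eta <= Jv F f t).
  { intros t Ht. rewrite !Jv_eq_Je by (unfold inTheta; lra).
    assert (Hd : Rabs (Je t - Je x) < eta) by (apply Hnearx; rewrite Rabs_right; lra).
    apply Rabs_def2 in Hd. lra. }
  assert (Hhigh : forall t, y - r <= t <= y -> Jv F f t <= Jv F f y + eta).
  { intros t Ht. rewrite !Jv_eq_Je by (unfold inTheta; lra).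
    assert (Hd : Rabs (Je t - Je y) < eta) by (apply Hneary; rewrite Rabs_left1; lra).
    apply Rabs_def2 in Hd. lra. }
  destruct (pooling_improves x (x + r) (y - r) y (Jv F f x - eta) (Jv F f y + eta))
    as [s [Hs Hgain]]; try assumption; try lra.
  specialize (HC s Hs). lra.
Qed.

End Revenue.

Theorem mainTheorem11 (tb : R) (F f : R -> R)
  (Htb : 0 < tb)
  (Hfcont : forall x, inTheta tb x ->
     filterlim f (within (inTheta tb) (locally x)) (locally (f x)))
  (Hfpos : forall x, inTheta tb x -> 0 < f x)
  (HF : forall x, inTheta tb x -> F x = RInt f 0 x)
  (HF1 : F tb = 1) :
  ((forall x y, 0 <= x -> x <= y -> y <= tb -> Jv F f x <= Jv F f y) <->
   (forall s sh, nondec01 tb s -> nondec01 tb sh -> MPS tb f s sh ->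
      Rev0 tb F f s >= Rev0 tb F f sh)) /\
  ((forall x y, 0 <= x -> x <= y -> y <= tb -> Jv F f x <= Jv F f y) <->
   (S0 tb F f F /\ forall s, S0 tb F f s -> Rev0 tb F f s <= Rev0 tb F f F)).
Proof.
  pose proof (F_nondec01 tb F f Htb Hfcont Hfpos HF HF1) as NF.
  pose proof (Rev0_le_of_MPS tb F f Htb Hfcont Hfpos HF) as Hfiner.
  pose proof (Jv_nondecreasing_of_optimal tb F f Htb Hfcont Hfpos HF HF1) as Hmono.
  assert (SF : S0 tb F f F) by (split; [exact NF | split; [intros; lra | reflexivity]]).
  split; split.
  - intros HJ s sh Hs Hsh HM. apply Rle_ge, Hfiner; assumption.
  - intros Hb. apply Hmono. intros s [Hs HM]. apply Rge_le, Hb; assumption.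
  - intros HJ. split; [exact SF|]. intros s [Hs HM]. apply Hfiner; assumption.
  - intros [_ Hc]. apply Hmono, Hc.
Qed.
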